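(* If $(s_1,s_2,p)\in\Gamma_3$ (respectively $\mathbb G_3$), then $\left(\tfrac{s_1}{3}+\omega\tfrac{s_2}{3},\,\omega p\right)\in\Gamma_2$ (respectively $\mathbb G_2$) for every $\omega\in\mathbb T$.
   Context: $\mathbb G_2=\{(z_1+z_2,z_1z_2):|z_1|,|z_2|<1\}$, $\Gamma_2$ the same with $\le1$; $\mathbb G_3=\{(z_1+z_2+z_3,z_1z_2+z_2z_3+z_3z_1,z_1z_2z_3):|z_i|<1\}$, $\Gamma_3$ the same with $|z_i|\le1$. *)

From mathcomp Require Import all_boot all_order all_algebra.
From mathcomp Require Import complex.
From mathcomp Require Import reals.
Set Implicit Arguments. Unset Strict Implicit. Unset Printing Implicit Defensive.
Import Order.TTheory GRing.Theory Num.Theory.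
Local Open Scope ring_scope.
Local Open Scope complex_scope.

Definition G2 (R : realType) : R[i] * R[i] -> Prop := fun x =>
  exists z1 z2 : R[i], `|z1| < 1 /\ `|z2| < 1 /\ x = (z1 + z2, z1 * z2).
Definition Gamma2 (R : realType) : R[i] * R[i] -> Prop := fun x =>
  exists z1 z2 : R[i], `|z1| <= 1 /\ `|z2| <= 1 /\ x = (z1 + z2, z1 * z2).

Definition G3 (R : realType) : R[i] * R[i] * R[i] -> Prop := fun x =>
  exists z1 z2 z3 : R[i], `|z1| < 1 /\ `|z2| < 1 /\ `|z3| < 1 /\
    x = (z1 + z2 + z3, z1 * z2 + z2 * z3 + z3 * z1, z1 * z2 * z3).
Definition Gamma3 (R : realType) : R[i] * R[i] * R[i] -> Prop := fun x =>
  exists z1 z2 z3 : R[i], `|z1| <= 1 /\ `|z2| <= 1 /\ `|z3| <= 1 /\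
    x = (z1 + z2 + z3, z1 * z2 + z2 * z3 + z3 * z1, z1 * z2 * z3).

From mathcomp Require Import all_boot all_order all_algebra.
From mathcomp Require Import complex reals.
From mathcomp Require Import ring.
Set Implicit Arguments. Unset Strict Implicit. Unset Printing Implicit Defensive.
Import Order.TTheory GRing.Theory Num.Theory.
Local Open Scope ring_scope.

(** Given z1, z2, z3 in the disc, (s1/3 + w s2/3, w p) is the mean of the three
    points (z_i + w z_j z_k, z_i * (w z_j z_k)) of Γ2, which all have the same
    second coordinate w p.  The fibres {s | (s, p) ∈ Γ2} are convex: by the
    Agler–Young description, (s, p) ∈ Γ2 iff |s| <= 2, |p| <= 1 and
    |s - s^* p| <= 1 - |p|^2, and s ↦ s - s^* p is R-linear.  For the converse
    half of that description one writes s = b + b^* p with |b| <= 1; every root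
    u of z^2 - s z + p then satisfies u (u - b) = p (b^* u - 1), and
    |b^* u - 1| <= |u - b| as soon as |u| >= 1, which forces |u| <= 1.
    The open case G3 -> G2 is the same argument with strict inequalities. *)

Section LteifArith.
Variable R : numDomainType.
Implicit Types (c : bool) (x y z t : R).

Lemma le_lteif_trans c x y z : x <= y -> y < z ?<= if c -> x < z ?<= if c.
Proof. exact: (@lteif_trans _ _ x y z true c). Qed.

Lemma lteifD c x y z t :
  x < y ?<= if c -> z < t ?<= if c -> x + z < y + t ?<= if c.
Proof. by case: c => /=; [apply: lerD | apply: ltrD]. Qed.

Lemma mulr_lteif0 c x y : 0 < x ?<= if c -> 0 < y ?<= if c -> 0 < x * y ?<= if c.
Proof. by case: c => /=; [apply: mulr_ge0 | apply: mulr_gt0]. Qed.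

Lemma mulr_ilteif1 c x y :
  0 <= x -> 0 <= y -> x < 1 ?<= if c -> y < 1 ?<= if c -> x * y < 1 ?<= if c.
Proof. by case: c => /=; [apply: mulr_ile1 | apply: mulr_ilt1]. Qed.

End LteifArith.

Section SymmetrizedPolydisc.
Variable C : numClosedFieldType.
Implicit Types (c : bool) (a b p s u w : C).

(* [symbidisc true] is Γ2 and [symbidisc false] is G2; likewise for
   [symtridisc] and Γ3, G3. *)
Definition symbidisc c (x : C * C) : Prop :=
  exists z1 z2 : C, `|z1| < 1 ?<= if c /\ `|z2| < 1 ?<= if c /\
    x = (z1 + z2, z1 * z2).

Definition symtridisc c (x : C * C * C) : Prop :=
  exists z1 z2 z3 : C, `|z1| < 1 ?<= if c /\ `|z2| < 1 ?<= if c /\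
    `|z3| < 1 ?<= if c /\
    x = (z1 + z2 + z3, z1 * z2 + z2 * z3 + z3 * z1, z1 * z2 * z3).

Definition defect p s := s - s^* * p.

Lemma defect_sum_prod a b :
  defect (a * b) (a + b) = a * (1 - `|b| ^+ 2) + b * (1 - `|a| ^+ 2).
Proof. by rewrite /defect !normCK rmorphD /=; ring. Qed.

Lemma defect_mean3 p s1 s2 s3 :
  defect p ((s1 + s2 + s3) / 3%:R) =
  (defect p s1 + defect p s2 + defect p s3) / 3%:R.
Proof. by rewrite /defect rmorphM fmorphV rmorph_nat !rmorphD /=; ring. Qed.

Lemma norm_mean3_lteif c (r x y z : C) :
  `|x| < r ?<= if c -> `|y| < r ?<= if c -> `|z| < r ?<= if c ->
  `|(x + y + z) / 3%:R| < r ?<= if c.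
Proof.
move=> hx hy hz; rewrite normrM normfV normr_nat lteif_pdivrMr ?ltr0n //.
rewrite (_ : r * 3%:R = r + r + r); last by ring.
apply: le_lteif_trans (ler_normD _ _) (lteifD _ hz).
exact: le_lteif_trans (ler_normD _ _) (lteifD hx hy).
Qed.

Lemma factor_sum_prod s p : exists u1 u2 : C, s = u1 + u2 /\ p = u1 * u2.
Proof.
pose r := sqrtC (s ^+ 2 - 4%:R * p).
have r2 : r ^+ 2 = s ^+ 2 - 4%:R * p by rewrite sqrtCK.
have two_neq0 : (2%:R : C) != 0 by rewrite pnatr_eq0.
exists ((s + r) / 2%:R), ((s - r) / 2%:R); split; first by field.
rewrite (_ : _ * _ = (s ^+ 2 - r ^+ 2) / 4%:R); last by field.
by rewrite r2; field.
Qed.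

Lemma conj_quadratic_no_outer_root b p u :
  u ^+ 2 - (b + b^* * p) * u + p = 0 -> `|b| <= 1 -> 1 <= `|u| ->
  `|b| < `|u| -> `|p| < `|u| -> False.
Proof.
move=> root_u b_le1 u_ge1 b_lt_u p_lt_u.
have u_neq0 : u != 0 by rewrite -normr_gt0 (le_lt_trans _ p_lt_u).
have u_neqb : u != b by apply: contraTneq b_lt_u => ->; rewrite ltxx.
have factored : u * (u - b) = p * (b^* * u - 1).
  by apply/eqP; rewrite -subr_eq0 -root_u; apply/eqP; ring.
have [bu1|bu_neq1] := eqVneq (b^* * u - 1) 0.
  move: factored; rewrite bu1 mulr0 => /eqP.
  by rewrite mulf_eq0 subr_eq0 (negbTE u_neq0) (negbTE u_neqb).
have norm_gap : `|u - b| ^+ 2 - `|b^* * u - 1| ^+ 2 =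
                (`|u| ^+ 2 - 1) * (1 - `|b| ^+ 2).
  by rewrite !normCK !(rmorphB, rmorphM, rmorph1) /= conjCK; ring.
have bu_le : `|b^* * u - 1| <= `|u - b|.
  rewrite -ler_sqr ?nnegrE // -subr_ge0 norm_gap mulr_ge0 // subr_ge0.
    by rewrite exprn_ege1.
  by rewrite exprn_ile1.
have : `|p| * `|b^* * u - 1| < `|u| * `|u - b|.
  apply: (lt_le_trans (y := `|u| * `|b^* * u - 1|)).
    by rewrite ltr_pM2r ?normr_gt0.
  by rewrite ler_wpM2l.
by rewrite -!normrM factored ltxx.
Qed.

Lemma conj_quadratic_root_lteif c b p u :
  u ^+ 2 - (b + b^* * p) * u + p = 0 ->
  `|b| < 1 ?<= if c -> `|p| < 1 ?<= if c -> `|u| < 1 ?<= if c.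
Proof.
move=> root_u; case: c => /= hb hp.
  rewrite real_leNgt ?normr_real //; apply/negP => u_gt1.
  exact: conj_quadratic_no_outer_root root_u hb (ltW u_gt1)
    (le_lt_trans hb u_gt1) (le_lt_trans hp u_gt1).
rewrite real_ltNge ?normr_real //; apply/negP => u_ge1.
exact: conj_quadratic_no_outer_root root_u (ltW hb) u_ge1
  (lt_le_trans hb u_ge1) (lt_le_trans hp u_ge1).
Qed.

Lemma symbidisc_conj c b p :
  `|b| < 1 ?<= if c -> `|p| < 1 ?<= if c -> symbidisc c (b + b^* * p, p).
Proof.
move=> hb hp; have [u1 [u2 [hs hp12]]] := factor_sum_prod (b + b^* * p) p.
have root_u1 : u1 ^+ 2 - (b + b^* * p) * u1 + p = 0 by rewrite hs hp12; ring.
have root_u2 : u2 ^+ 2 - (b + b^* * p) * u2 + p = 0 by rewrite hs hp12; ring.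
exists u1, u2; split; first exact: conj_quadratic_root_lteif root_u1 hb hp.
by split; [exact: conj_quadratic_root_lteif root_u2 hb hp | rewrite -hs -hp12].
Qed.

Lemma symbidisc_defect c s p : symbidisc c (s, p) ->
  [/\ `|s| <= 2%:R, `|p| <= 1 & `|defect p s| < 1 - `|p| ^+ 2 ?<= if c].
Proof.
move=> [a [b [ha [hb [-> ->]]]]].
have [a_le1 b_le1] := (lteifW ha, lteifW hb).
have sq_compl (x : C) : `|x| <= 1 -> 0 <= 1 - `|x| ^+ 2.
  by move=> x_le1; rewrite subr_ge0 exprn_ile1.
split.
- by rewrite (le_trans (ler_normD _ _)) // -[2%:R]/(1 + 1 : C) lerD.
- by rewrite normrM mulr_ile1.
rewrite defect_sum_prod; apply: le_lteif_trans (ler_normD _ _) _.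
rewrite !normrM (ger0_norm (sq_compl _ a_le1)) (ger0_norm (sq_compl _ b_le1)).
rewrite -subr_lteif0r.
rewrite (_ : _ - _ = (1 - `|a|) * (1 - `|b|) * (1 - `|a| * `|b|)); last by ring.
by rewrite !mulr_lteif0 // subr_lteif0r // mulr_ilteif1.
Qed.

Lemma symbidisc_of_defect c s p :
  `|s| <= 2%:R -> `|p| <= 1 -> `|defect p s| < 1 - `|p| ^+ 2 ?<= if c ->
  symbidisc c (s, p).
Proof.
move=> s_le2; rewrite le_eqVlt => /orP[/eqP p1 | p_lt1] small_defect.
- move: small_defect; rewrite p1 expr1n subrr.
  case: c => /= [|]; last by rewrite normr_lt0.
  rewrite normr_le0 subr_eq0 => /eqP s_self.
  have -> : s = s / 2%:R + (s / 2%:R)^* * p.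
    rewrite {1}[s]splitr rmorphM fmorphV rmorph_nat /=.
    by rewrite -mulrA [_^-1 * p]mulrC mulrA -s_self.
  apply: symbidisc_conj => /=; last by rewrite p1.
  by rewrite normrM normfV normr_nat ler_pdivrMr ?ltr0n // mul1r.
- have gap_gt0 : 0 < 1 - `|p| ^+ 2 by rewrite subr_gt0 exprn_ilt1.
  have gap_neq0 : 1 - p * p^* != 0 by rewrite -normCK gt_eqF.
  pose b := defect p s / (1 - `|p| ^+ 2).
  have -> : s = b + b^* * p.
    rewrite /b normCK /defect !(rmorphM, rmorphB, fmorphV, rmorph1) /= !conjCK.
    by field; rewrite mulrC.
  apply: symbidisc_conj; last exact: lteifS.
  by rewrite normf_div (gtr0_norm gap_gt0) lteif_pdivrMr // mul1r.
Qed.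

Lemma symbidisc_mean3 c s1 s2 s3 p :
  symbidisc c (s1, p) -> symbidisc c (s2, p) -> symbidisc c (s3, p) ->
  symbidisc c ((s1 + s2 + s3) / 3%:R, p).
Proof.
move=> /symbidisc_defect[h1 _ d1] /symbidisc_defect[h2 _ d2].
move=> /symbidisc_defect[h3 p_le1 d3].
apply: symbidisc_of_defect p_le1 _.
  exact: (norm_mean3_lteif (c := true) h1 h2 h3).
by rewrite defect_mean3; apply: norm_mean3_lteif d1 d2 d3.
Qed.

Lemma symtridisc_compress c s1 s2 p w : `|w| = 1 ->
  symtridisc c (s1, s2, p) -> symbidisc c (s1 / 3%:R + w * (s2 / 3%:R), w * p).
Proof.
move=> w1 [z1 [z2 [z3 [h1 [h2 [h3 [-> -> ->]]]]]]].
have pair (x y z : C) :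
    `|x| < 1 ?<= if c -> `|y| < 1 ?<= if c -> `|z| < 1 ?<= if c ->
    x * y * z = z1 * z2 * z3 ->
    symbidisc c (x + w * (y * z), w * (z1 * z2 * z3)).
  move=> hx hy hz <-; exists x, (w * (y * z)).
  split=> //; split; last by congr (_, _); ring.
  by rewrite !normrM w1 mul1r mulr_ilteif1.
rewrite (_ : _ + _ = ((z1 + w * (z2 * z3)) + (z2 + w * (z3 * z1))
                      + (z3 + w * (z1 * z2))) / 3%:R); last by ring.
by apply: symbidisc_mean3; apply: pair => //; ring.
Qed.

End SymmetrizedPolydisc.

Theorem mainTheorem15 (R : realType) (s1 s2 p w : R[i]) :
  `|w| = 1 ->
  (Gamma3 (s1, s2, p) -> Gamma2 (s1 / 3%:R + w * (s2 / 3%:R), w * p)) /\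
  (G3 (s1, s2, p) -> G2 (s1 / 3%:R + w * (s2 / 3%:R), w * p)).
Proof.
move=> w1; split.
  exact (symtridisc_compress (c := true) w1).
exact (symtridisc_compress (c := false) w1).
Qed.
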